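(* Let $\lambda\ge0$ and $1\le n\le\lambda+1$ be integers, and let $I_n$ be the set of sequences $(k_0,\ldots,k_a)$ of non-negative integers with $\sum_{j=0}^ak_j=n$ and $\sum_{j=0}^ajk_j=n$. Then $$w_{n,\lambda}(Y)=\sum_{(k_0,\ldots,k_a)\in I_n}q_{(k_0,\ldots,k_a)}\prod_{j=0}^a\big(U^{(j)}(Y)\big)^{k_j}$$ for some $q_{(k_0,\ldots,k_a)}\in\mathbb{Q}_+$.
   Context: Let $a\ge2$ be an integer, $R$ a $\mathbb{Q}$-algebra, $u_0,\ldots,u_a\in R$, and $U(Y)=\sum_{j=0}^au_jY^j\in R[Y]$, with $U^{(j)}$ its $j$-th derivative in $Y$. $\mathbb{Q}_+$ denotes the positive rationals. For each integer $\lambda\ge0$ define polynomials $w_{n,\lambda}(Y)\in R[Y]$ recursively by $w_{0,\lambda}(Y)=1/(\lambda+1)$ and $w_{n,\lambda}(Y)=(\lambda-n+2)U'(Y)w_{n-1,\lambda}(Y)+U(Y)w_{n-1,\lambda}'(Y)$ for $n\ge1$. *)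

From HB Require Import structures.
From mathcomp Require Import all_boot all_order all_algebra.
Set Implicit Arguments. Unset Strict Implicit. Unset Printing Implicit Defensive.
Import Order.TTheory GRing.Theory Num.Theory.
Local Open Scope ring_scope.

Definition Upoly (R : comAlgType rat) (a : nat) (u : 'I_a.+1 -> R) : {poly R} :=
  \sum_(j < a.+1) u j *: 'X^j.

Fixpoint wpoly (R : comAlgType rat) (U : {poly R}) (lam n : nat) : {poly R} :=
  match n with
  | 0 => ((lam.+1%:R : rat)^-1)%:A%:P
  | m.+1 => ((lam%:Z - m.+1%:Z + 2)%:~R : R)%:P * U^`() * wpoly U lam m
            + U * (wpoly U lam m)^`()
  end.

(* membership in I_n, for sequences (k_0..k_a) whose entries are bounded by n
   (automatic, since they are nonnegative and sum to n) *)
Definition inI (a n : nat) (k : {ffun 'I_a.+1 -> 'I_n.+1}) : bool :=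
  ((\sum_(j < a.+1) (k j : nat))%N == n) &&
  ((\sum_(j < a.+1) (j * k j))%N == n).

From HB Require Import structures.
From mathcomp Require Import all_boot all_order all_algebra.
From mathcomp Require Import zify ring.
Set Implicit Arguments. Unset Strict Implicit. Unset Printing Implicit Defensive.
Import Order.TTheory GRing.Theory Num.Theory.

(* Write M_k = prod_j (U^(j))^(k_j) and use w_n = c U' w_(n-1) + U w_(n-1)'
   with c = lam - n + 2 > 0 (this is where n <= lam + 1 is used). Here
   U' M_k = M_(k + e_1) and U M_k' = sum_j k_j M_(k - e_j + e_(j+1) + e_0), the
   term j = a vanishing because deg U <= a. Each move raises both sum_j k_j and
   sum_j j k_j by one, so by induction w_n is a combination of the M_k, k in
   I_n, with nonnegative coefficients. They are positive because every k in I_n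
   is reached: from k - e_1 if k_1 > 0; otherwise, as sum_j (j - 1) k_j = 0
   and sum_j j k_j > 0, both k_0 and some k_j with j >= 2 are positive, and k
   is reached from k - e_j + e_(j-1) - e_0. *)

Section MultiIndex.
Variables a n : nat.
Local Notation mindex := {ffun 'I_a.+1 -> 'I_n.+1}.
Implicit Types (k : mindex) (i j l : 'I_a.+1) (m : nat).

(* Entries above n are truncated by [inord]: the operations below are only
   meaningful when no entry overflows. *)
Definition mindex_of (f : 'I_a.+1 -> nat) : mindex := [ffun i => inord (f i)].

Lemma mindex_ofE f i : f i <= n -> mindex_of f i = f i :> nat.
Proof. by move=> le_fn; rewrite ffunE inordK. Qed.

Definition incr_at i k := mindex_of (fun l : 'I_a.+1 => k l + (l == i)).
Definition decr_at i k := mindex_of (fun l : 'I_a.+1 => k l - (l == i)).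

Lemma incr_atE i k l : k i < n -> incr_at i k l = k l + (l == i) :> nat.
Proof.
move=> lt_kin; rewrite mindex_ofE //.
by case: eqP => [->|_]; rewrite ?addn1 // addn0 -ltnS.
Qed.

Lemma decr_atE i k l : decr_at i k l = k l - (l == i) :> nat.
Proof. by rewrite mindex_ofE // (leq_trans (leq_subr _ _)) // -ltnS. Qed.

Lemma big_incr_at (g : 'I_a.+1 -> nat) i k : k i < n ->
  \sum_l g l * incr_at i k l = \sum_l g l * k l + g i.
Proof.
move=> lt_kin; rewrite (bigD1 i) // [X in _ = X + _](bigD1 i) //=.
rewrite incr_atE // eqxx.
rewrite mulnDr muln1 addnAC; congr (_ + _ + _).
by apply: eq_bigr => l /negbTE ne_li; rewrite incr_atE // ne_li addn0.
Qed.

Lemma big_decr_at (g : 'I_a.+1 -> nat) i k : 0 < k i ->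
  \sum_l g l * decr_at i k l + g i = \sum_l g l * k l.
Proof.
move=> kpos; rewrite (bigD1 i) // [RHS](bigD1 i) //= decr_atE eqxx.
rewrite addnAC -mulnSr subn1 prednK //; congr (_ + _).
by apply: eq_bigr => l /negbTE ne_li; rewrite decr_atE ne_li subn0.
Qed.

Definition mdeg k := \sum_(l < a.+1) (k l : nat).
Definition mweight k := \sum_(l < a.+1) l * k l.
Definition inIat m k := (mdeg k == m) && (mweight k == m).

Lemma mdegE k : mdeg k = \sum_l 1 * k l.
Proof. by apply: eq_bigr => l _; rewrite mul1n. Qed.

Lemma mdeg_incr_at i k : k i < n -> mdeg (incr_at i k) = (mdeg k).+1.
Proof. by move=> lt_kin; rewrite !mdegE big_incr_at // addn1. Qed.

Lemma mweight_incr_at i k : k i < n -> mweight (incr_at i k) = mweight k + i.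
Proof. exact: big_incr_at. Qed.

Lemma mdeg_decr_at i k : 0 < k i -> (mdeg (decr_at i k)).+1 = mdeg k.
Proof. by move=> kpos; rewrite !mdegE -addn1 big_decr_at. Qed.

Lemma mweight_decr_at i k : 0 < k i -> mweight (decr_at i k) + i = mweight k.
Proof. exact: big_decr_at. Qed.

Lemma leq_entry_mdeg k i : k i <= mdeg k.
Proof. by rewrite /mdeg (bigD1 i) //= leq_addr. Qed.

Lemma inIat0 k : inIat 0 k = (k == [ffun => ord0]).
Proof.
apply/idP/eqP => [/andP[/eqP dk _]|->].
  apply/ffunP => l; apply: val_inj; rewrite ffunE /=.
  by apply/eqP; rewrite -leqn0 -dk leq_entry_mdeg.
by rewrite /inIat /mdeg /mweight !big1 // => l _; rewrite ffunE ?muln0.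
Qed.

Lemma lt_entry_mdeg k i : mdeg k < n -> k i < n.
Proof. exact/leq_ltn_trans/leq_entry_mdeg. Qed.

Lemma inIat_lt_entry m k i : m < n -> inIat m k -> k i < n.
Proof. by move=> lt_mn /andP[/eqP dk _]; apply: lt_entry_mdeg; rewrite dk. Qed.

Lemma incr_decr_at i k : 0 < k i -> incr_at i (decr_at i k) = k.
Proof.
move=> kpos; have lt_kin : decr_at i k i < n.
  by rewrite decr_atE eqxx; have := ltn_ord (k i); lia.
apply/ffunP => l; apply: val_inj; rewrite /= incr_atE // decr_atE.
by case: eqP => [->|]; rewrite ?subn0 ?addn0 //; lia.
Qed.

Lemma inIat_incr1 m k : 0 < a -> m < n -> inIat m k ->
  inIat m.+1 (incr_at (inord 1) k).
Proof.
move=> a_gt0 lt_mn km; have lt_kn := inIat_lt_entry (inord 1) lt_mn km.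
move: km => /andP[/eqP dk /eqP wk].
by rewrite /inIat mdeg_incr_at // mweight_incr_at // inordK // dk wk addn1 !eqxx.
Qed.

Lemma inIat_decr1 m k : 0 < a -> 0 < k (inord 1) -> inIat m.+1 k ->
  inIat m (decr_at (inord 1) k).
Proof.
move=> a_gt0 kpos /andP[/eqP dk /eqP wk].
have := mdeg_decr_at kpos; have := mweight_decr_at kpos; rewrite inordK // dk wk.
by move=> w d; rewrite /inIat; apply/andP; split; apply/eqP; lia.
Qed.

Definition deriv_at j k := incr_at ord0 (incr_at (inord j.+1) (decr_at j k)).

Lemma deriv_at_bounds j k : 0 < k j -> mdeg k < n ->
  decr_at j k (inord j.+1) < n /\ incr_at (inord j.+1) (decr_at j k) ord0 < n.
Proof.
move=> kpos lt_kn; have dk1 := mdeg_decr_at kpos.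
have lt1 : decr_at j k (inord j.+1) < n by apply: lt_entry_mdeg; lia.
split=> //; apply: lt_entry_mdeg; rewrite mdeg_incr_at //; lia.
Qed.

Lemma deriv_atE j k l : j < a -> 0 < k j -> mdeg k < n ->
  deriv_at j k l = k l - (l == j) + (l == j.+1 :> nat) + (l == 0 :> nat) :> nat.
Proof.
move=> lt_ja kpos lt_kn; have [lt1 lt2] := deriv_at_bounds kpos lt_kn.
rewrite incr_atE // incr_atE // decr_atE.
by congr (_ + _ + _); rewrite -val_eqE /= inordK.
Qed.

Lemma inIat_deriv_at m j k : m < n -> j < a -> 0 < k j -> inIat m k ->
  inIat m.+1 (deriv_at j k).
Proof.
move=> lt_mn lt_ja kpos /andP[/eqP dk /eqP wk].
have lt_kn : mdeg k < n by rewrite dk.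
have [lt1 lt2] := deriv_at_bounds kpos lt_kn.
have := mdeg_decr_at kpos; have := mweight_decr_at kpos.
rewrite /inIat /deriv_at mdeg_incr_at // mweight_incr_at // mdeg_incr_at //.
rewrite mweight_incr_at // inordK // addn0 dk wk => w d.
by apply/andP; split; apply/eqP; lia.
Qed.

Lemma heavy_entry k : 0 < a -> k (inord 1) = 0 :> nat -> 0 < mweight k ->
  exists2 j : 'I_a.+1, 1 < j & 0 < k j.
Proof.
move=> a_gt0 k1 w_gt0; apply/exists_inP; apply: contraTT w_gt0.
move=> /exists_inPn light; rewrite -leqNgt leqn0; apply/eqP/big1 => l _.
have [l0|l_gt1|l1] := ltngtP l 1; first by move: l0; rewrite ltnS leqn0 => /eqP->.
  by move: (light l l_gt1); rewrite lt0n negbK => /eqP->; rewrite muln0.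
by rewrite (_ : l = inord 1) ?k1 ?muln0 //; apply: val_inj; rewrite /= inordK.
Qed.

Lemma entry0_pos k j : 1 < j -> 0 < k j -> mweight k <= mdeg k -> 0 < k ord0.
Proof.
move=> j_gt1 kpos; rewrite lt0n; apply: contraTneq => k0; rewrite -ltnNge.
rewrite /mweight /mdeg (bigD1 j) // [X in _ < X](bigD1 j) //= -addSn.
apply: leq_add; first exact: ltn_Pmull.
apply: leq_sum => l _; have [l0|l_gt0] := posnP l; last by rewrite leq_pmull.
by rewrite (_ : l = ord0) ?k0 //; exact: val_inj.
Qed.

Lemma deriv_at_preimage m k j : m < n -> 1 < j -> 0 < k j -> 0 < k ord0 ->
  inIat m.+1 k ->
  exists i k', [/\ i < a, inIat m k', 0 < k' i & k = deriv_at i k'].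
Proof.
move=> lt_mn j_gt1 kj k0 /andP[/eqP dk /eqP wk].
have lt_ja : j.-1 < a by have := ltn_ord j; lia.
set i : 'I_a.+1 := inord j.-1.
have iE : i = j.-1 :> nat by rewrite inordK // ltnS ltnW.
have k2j0 : 0 < decr_at j k ord0 by rewrite decr_atE -val_eqE /=; case: eqP; lia.
have d2 := mdeg_decr_at k2j0; have w2 := mweight_decr_at k2j0.
set k2 := decr_at ord0 (decr_at j k) in d2 w2 *; rewrite addn0 in w2.
have d1 := mdeg_decr_at kj; have w1 := mweight_decr_at kj.
have lt_k2n : k2 i < n by apply: lt_entry_mdeg; lia.
have d' := mdeg_incr_at lt_k2n; have w' := mweight_incr_at lt_k2n.
set k' := incr_at i k2 in d' w' *.
have k'E l : k' l = k l - (l == j) - (l == ord0) + (l == i) :> nat.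
  by rewrite incr_atE // decr_atE decr_atE.
have k'i : 0 < k' i by rewrite k'E eqxx addn1.
exists i, k'; split; rewrite ?iE //.
  by rewrite /inIat d' w' iE; apply/andP; split; apply/eqP; lia.
apply/ffunP => l; apply: val_inj; rewrite /= deriv_atE ?iE ?d' //; last by lia.
rewrite k'E; have := ltn_ord (k l).
have [->|ne_lj] := eqVneq l j; last have [->|ne_l0] := eqVneq l ord0.
3: move: ne_lj ne_l0.
all: by rewrite -!val_eqE /= ?iE ?prednK; lia.
Qed.

Lemma inIat_cover m k : 0 < a -> m < n -> inIat m.+1 k ->
  (exists2 k', inIat m k' & k = incr_at (inord 1) k') \/
  (exists i k', [/\ i < a, inIat m k', 0 < k' i & k = deriv_at i k']).
Proof.
move=> a_gt0 lt_mn km; have [k1|k1] := posnP (k (inord 1)); last first.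
  by left; exists (decr_at (inord 1) k); rewrite ?incr_decr_at ?inIat_decr1.
right; have /andP[/eqP dk /eqP wk] := km.
have w_gt0 : 0 < mweight k by rewrite wk.
have [j j_gt1 kj] := heavy_entry a_gt0 k1 w_gt0.
have k0 : 0 < k ord0 by apply: entry0_pos j_gt1 kj _; rewrite dk wk.
exact: deriv_at_preimage lt_mn j_gt1 kj k0 km.
Qed.

End MultiIndex.

Local Open Scope ring_scope.

Section PositiveCombination.
Variables (V : pzRingType) (phi : {rmorphism rat -> V}).
Variables (K : finType) (T : pred K) (f : K -> V).

Lemma big_indicator1 (x : K) (c : rat) : (c != 0 -> T x) ->
  \sum_(k | T k) phi (c * (k == x)%:R) * f k = phi c * f x.
Proof.
move=> Tx; have [->|c_neq0] := eqVneq c 0.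
  by rewrite rmorph0 mul0r big1 // => k _; rewrite mul0r rmorph0 mul0r.
rewrite (bigD1 x) ?Tx //= eqxx mulr1 big1 ?addr0 // => k /andP[_ /negbTE->].
by rewrite mulr0 rmorph0 mul0r.
Qed.

Lemma big_indicator (J : finType) (x : K) (c : rat) (d : J -> rat) (y : J -> K) :
  T x -> (forall j, d j != 0 -> T (y j)) ->
  \sum_(k | T k) phi (c * (k == x)%:R + \sum_j d j * (k == y j)%:R) * f k =
  phi c * f x + \sum_j phi (d j) * f (y j).
Proof.
move=> Tx Ty; under eq_bigr do rewrite rmorphD rmorph_sum mulrDl mulr_suml.
rewrite big_split /= big_indicator1 // exchange_big /=; congr (_ + _).
by apply: eq_bigr => j _; rewrite big_indicator1 //; exact: Ty.
Qed.

Lemma pos_comb_sum (I : finType) (S : pred I) (q : I -> rat) (t : I -> K -> rat) :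
  (forall i, S i -> 0 < q i) -> (forall i k, 0 <= t i k) ->
  (forall k, T k -> exists2 i, S i & 0 < t i k) ->
  exists2 Q : K -> rat, (forall k, T k -> 0 < Q k) &
    \sum_(i | S i) phi (q i) * \sum_(k | T k) phi (t i k) * f k =
    \sum_(k | T k) phi (Q k) * f k.
Proof.
move=> q_gt0 t_ge0 cover; exists (fun k => \sum_(i | S i) q i * t i k).
  move=> k /cover[i Si t_gt0]; rewrite (bigD1 i) //=.
  rewrite ltr_pwDl ?mulr_gt0 ?q_gt0 //.
  by apply: sumr_ge0 => i' /andP[Si' _]; rewrite mulr_ge0 ?t_ge0 ?ltW ?q_gt0.
under eq_bigr do rewrite mulr_sumr.
rewrite exchange_big /=; apply: eq_bigr => k _.
by rewrite rmorph_sum mulr_suml; apply: eq_bigr => i _; rewrite rmorphM mulrA.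
Qed.

End PositiveCombination.

Lemma deriv_prod (R : comNzRingType) N (F : 'I_N -> {poly R}) :
  (\prod_(i < N) F i)^`() =
  \sum_(i < N) \prod_(l < N) (if l == i then (F l)^`() else F l).
Proof.
elim: N F => [|N IH] F; first by rewrite !big_ord0 derivC.
rewrite big_ord_recr /= derivM IH big_ord_recr /= mulr_suml; congr (_ + _).
  apply: eq_bigr => i _; rewrite big_ord_recr /=.
  by rewrite (negbTE (_ : ord_max != widen_ord _ i)) // neq_ltn /= ltn_ord orbT.
rewrite big_ord_recr /= eqxx; congr (_ * _); apply: eq_bigr => l _.
by rewrite (negbTE (_ : widen_ord _ l != ord_max)) // neq_ltn /= ltn_ord.
Qed.

Section DifferentialMonomial.
Variables (R : comNzRingType) (U : {poly R}) (a n : nat).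
Local Notation mindex := {ffun 'I_a.+1 -> 'I_n.+1}.
Implicit Types (k : mindex) (i j : 'I_a.+1).

Definition dmonomial k := \prod_(j < a.+1) U^`(j) ^+ k j.

Lemma dmonomial_incr_at i k : (k i < n)%N ->
  dmonomial (incr_at i k) = U^`(i) * dmonomial k.
Proof.
move=> lt_kin; rewrite /dmonomial (bigD1 i) // [in RHS](bigD1 i) //=.
rewrite mulrA -exprS incr_atE // eqxx addn1; congr (_ * _).
by apply: eq_bigr => l /negbTE ne_li; rewrite incr_atE // ne_li addn0.
Qed.

Lemma deriv_dmonomial k :
  (dmonomial k)^`() = \sum_(j < a.+1) U^`(j.+1) * dmonomial (decr_at j k) *+ k j.
Proof.
rewrite /dmonomial deriv_prod; apply: eq_bigr => j _.
rewrite (bigD1 j) //= eqxx [in RHS](bigD1 j) //= deriv_exp -derivnS.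
rewrite decr_atE eqxx subn1.
rewrite -!mulrnAl mulrA; congr (_ * _).
by apply: eq_bigr => l /negbTE ne_lj; rewrite ne_lj decr_atE ne_lj subn0.
Qed.

Lemma mul_deriv_dmonomial k : (size U <= a.+1)%N -> (mdeg k < n)%N ->
  U * (dmonomial k)^`() =
  \sum_(j < a.+1) dmonomial (deriv_at j k) *+ (k j * (j < a)).
Proof.
move=> le_Ua lt_kn; rewrite deriv_dmonomial mulr_sumr; apply: eq_bigr => j _.
have [->|kpos] := posnP (k j); first by rewrite !mulr0n mulr0.
have [lt_ja|le_aj] := ltnP j a; last first.
  by rewrite muln0 mulr0n derivn_poly0 ?mul0r ?mul0rn ?mulr0 // (leq_trans le_Ua).
have [lt1 lt2] := deriv_at_bounds kpos lt_kn.
rewrite muln1 /deriv_at dmonomial_incr_at // dmonomial_incr_at // inordK //.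
by rewrite derivn0 -!mulrnAr mulrA.
Qed.

End DifferentialMonomial.

Lemma wpolyS (R : comAlgType rat) (U : {poly R}) lam m : (m <= lam)%N ->
  wpoly U lam m.+1 =
  (lam - m).+1%:R * U^`() * wpoly U lam m + U * (wpoly U lam m)^`().
Proof.
move=> le_ml /=; congr (_ * _ * _ + _).
have -> : lam%:Z - m.+1%:Z + 2 = (lam - m).+1 by lia.
by rewrite polyC_natr.
Qed.

Lemma size_Upoly (R : comAlgType rat) a (u : 'I_a.+1 -> R) :
  (size (Upoly u) <= a.+1)%N.
Proof.
apply: leq_trans (size_sum _ _ _) _; apply/bigmax_leqP => j _.
by apply: leq_trans (size_scale_leq _ _) _; rewrite size_polyXn ltn_ord.
Qed.

Section DerivativeRecursion.
Variables (R : comAlgType rat) (U : {poly R}) (a n : nat).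
Hypotheses (a_gt0 : (0 < a)%N) (le_Ua : (size U <= a.+1)%N).
Local Notation mindex := {ffun 'I_a.+1 -> 'I_n.+1}.
Local Notation ratP := (polyC \o in_alg R).

Definition pos_dcomb m (p : {poly R}) := exists q : mindex -> rat,
  (forall k, inIat m k -> 0 < q k) /\
  p = \sum_(k | inIat m k) ratP (q k) * dmonomial U k.

Lemma pos_dcomb_step m c p : (m < n)%N -> 0 < c -> pos_dcomb m p ->
  pos_dcomb m.+1 (ratP c * U^`() * p + U * p^`()).
Proof.
move=> lt_mn c_gt0 [q [q_gt0 ->]].
pose d (k' : mindex) (j : 'I_a.+1) : rat := (k' j * (j < a))%:R.
pose t k' k := c * (k == incr_at (inord 1) k')%:R +
               \sum_j d k' j * (k == deriv_at j k')%:R.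
have t_ge0 k' k : 0 <= t k' k.
  rewrite /t; apply: addr_ge0; first by rewrite mulr_ge0 ?(ltW c_gt0) ?ler0n.
  by apply: sumr_ge0 => j _; rewrite mulr_ge0 ?ler0n.
have cover k : inIat m.+1 k -> exists2 k', inIat m k' & 0 < t k' k.
  case/(inIat_cover a_gt0 lt_mn) => [[k' k'm ->]|[j [k' [lt_ja k'm k'j ->]]]].
    exists k' => //; rewrite /t eqxx mulr1 ltr_pwDl // sumr_ge0 // => *.
    by rewrite mulr_ge0.
  exists k' => //; rewrite /t ltr_wpDl ?mulr_ge0 ?(ltW c_gt0) ?ler0n //.
  rewrite (bigD1 j) //= eqxx mulr1 ltr_pwDl ?sumr_ge0 // ?ltr0n ?lt_ja ?muln1 //.
  by move=> *; rewrite mulr_ge0.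
have [Q Q_gt0 eqQ] := pos_comb_sum ratP (@dmonomial _ U a n) q_gt0 t_ge0 cover.
exists Q; split=> //; rewrite -eqQ.
rewrite raddf_sum !mulr_sumr -big_split; apply: eq_bigr => k' k'm.
rewrite /t big_indicator ?inIat_incr1 //; last first.
  move=> j; rewrite pnatr_eq0 muln_eq0 negb_or -!lt0n => /andP[k'j].
  by case: (ltnP j a) => // lt_ja _; exact: inIat_deriv_at.
have lt_k'n : (mdeg k' < n)%N by case/andP: k'm => /eqP->.
rewrite /= deriv_mulC [U * (_ * _)]mulrCA mul_deriv_dmonomial //.
rewrite dmonomial_incr_at ?(inIat_lt_entry _ lt_mn) // inordK // derivn1.
under [in RHS]eq_bigr do rewrite /d scaler_nat polyC_natr mulr_natl.
ring.
Qed.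

Lemma pos_dcomb_wpoly0 lam : pos_dcomb 0 (wpoly U lam 0).
Proof.
exists (fun _ => lam.+1%:R^-1); split=> [k _|]; first by rewrite invr_gt0 ltr0Sn.
rewrite (big_pred1 [ffun => ord0]) => [|k]; last exact: inIat0.
by rewrite /dmonomial big1 ?mulr1 // => j _; rewrite ffunE expr0.
Qed.

Lemma pos_dcomb_wpoly lam m : (m <= n)%N -> (m <= lam.+1)%N ->
  pos_dcomb m (wpoly U lam m).
Proof.
elim: m => [|m IHm] le_mn le_ml; first exact: pos_dcomb_wpoly0.
rewrite wpolyS // -(rmorph_nat ratP).
apply: (pos_dcomb_step (c := (lam - m).+1%:R)) => //.
by apply: IHm; exact: ltnW.
Qed.

End DerivativeRecursion.

Theorem mainTheorem6 (R : comAlgType rat) (a : nat) (u : 'I_a.+1 -> R)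
    (lam n : nat) :
  (2 <= a)%N -> (1 <= n)%N -> (n <= lam.+1)%N ->
  exists q : {ffun 'I_a.+1 -> 'I_n.+1} -> rat,
    (forall k, inI k -> 0 < q k) /\
    wpoly (Upoly u) lam n =
      \sum_(k : {ffun 'I_a.+1 -> 'I_n.+1} | inI k)
         (q k)%:A%:P * \prod_(j < a.+1) ((Upoly u)^`(j)) ^+ (k j).
Proof.
move=> le2a _ le_nl.
exact: (@pos_dcomb_wpoly R (Upoly u) a n (ltnW le2a) (size_Upoly u) lam n
          (leqnn n) le_nl).
Qed.
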